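(* Let $G$ be a graph with edge set $E$, $k\ge1$, suppose $M_k(G)$ is a connected matroid, let $B$ be a base of $M_k(G)$ and $e\in B$, and let $A$ be the component of $G\langle B\rangle$ containing $e$. Suppose $e\notin E(\lfloor A\rfloor)$. Then exactly one of the two components of $A\setminus e$ is a tree, say $T$, and the fundamental cocircuit $K(e,B)$ equals $\{e\}\cup\{u\in E\setminus B: u \text{ has at least one end-vertex in } V(T)\}$.
   Context: Graphs are finite, may have loops and parallel edges, and have no isolated vertices; $A\setminus e$ deletes the edge $e$ and keeps all vertices (a single vertex is a tree). A leaf is a vertex incident to exactly one edge, which is not a loop. $\Delta H=|E(H)|-|V(H)|$. For $X\subseteq E$, $G\langle X\rangle$ is the subgraph with edge set $X$ and vertex set the vertices incident to $X$. For $k\ge0$, $M_k(G)$ is the matroid on $E$ whose circuits are the inclusion-minimal members of $\{C\subseteq E:C\neq\emptyset,\ |C|=|V(G\langle C\rangle)|+k\}$. A matroid is connected if its ground set has at least two elements and every two elements lie in a common circuit. For a base $B$ and $e\in B$, $K(e,B)$ is the unique cocircuit $K$ of the matroid with $K\cap B=\{e\}$. For a connected graph $A$ containing a cycle, its kernel $\lfloor A\rfloor$ is the subgraph obtained by repeatedly deleting leaves (with their incident edges) until no leaf remains (the components of $G\langle B\rangle$ each contain a cycle here). *)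

From mathcomp Require Import all_boot.
Set Implicit Arguments. Unset Strict Implicit. Unset Printing Implicit Defensive.

(* A finite multigraph: vertex type V, edge type E, and each edge f has
   end-vertices (ends f).1 and (ends f).2 (equal for a loop). *)
Section Graphs.
Variables (V E : finType) (ends : E -> V * V).

Definition incident (f : E) (v : V) : bool :=
  ((ends f).1 == v) || ((ends f).2 == v).

Definition is_loop (f : E) : bool := (ends f).1 == (ends f).2.

Definition no_isolated : Prop := forall v : V, exists f : E, incident f v.

(* vertex set of G<X> *)
Definition Vof (X : {set E}) : {set V} := [set v | [exists f in X, incident f v]].

Definition adj (F : {set E}) : rel V := fun x y =>
  [exists f in F, (((ends f).1 == x) && ((ends f).2 == y))
                  || (((ends f).1 == y) && ((ends f).2 == x))].

(* degree of v in the edge set C (a loop counts twice) *)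
Definition deg (C : {set E}) (v : V) : nat :=
  \sum_(f in C) (((ends f).1 == v) + ((ends f).2 == v)).

Definition graph_cycle (C : {set E}) : Prop :=
  C != set0 /\
  (forall x y, x \in Vof C -> y \in Vof C -> connect (adj C) x y) /\
  (forall v, v \in Vof C -> deg C v = 2).

Definition is_tree (W : {set V}) (F : {set E}) : Prop :=
  (exists x, x \in W) /\
  (forall x y, x \in W -> y \in W -> connect (adj F) x y) /\
  (forall C : {set E}, C \subset F -> ~ graph_cycle C).

Definition Mk_circuit (k : nat) (C : {set E}) : bool :=
  minset (fun X : {set E} => (X != set0) && (#|X| == #|Vof X| + k)) C.

Definition Mk_indep (k : nat) (I : {set E}) : bool :=
  [forall C : {set E}, (C \subset I) ==> ~~ Mk_circuit k C].

Definition Mk_base (k : nat) (B : {set E}) : bool := maxset (Mk_indep k) B.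

Definition Mk_cocircuit (k : nat) (K : {set E}) : bool :=
  minset (fun X : {set E} => [forall B : {set E}, Mk_base k B ==> (X :&: B != set0)]) K.

Definition Mk_connected (k : nat) : Prop :=
  2 <= #|E| /\
  forall x y : E, exists C, [/\ Mk_circuit k C, x \in C & y \in C].

(* component of G<B> containing edge e: vertex set and edge set *)
Definition compV (B : {set E}) (e : E) : {set V} :=
  [set v | connect (adj B) (ends e).1 v].
Definition compE (B : {set E}) (e : E) : {set E} :=
  [set f in B | (ends f).1 \in compV B e].

Definition components (W : {set V}) (F : {set E}) : {set {set V}} :=
  [set [set y in W | connect (adj F) x y] | x in W].

Definition edges_in (F : {set E}) (T : {set V}) : {set E} :=
  [set f in F | ((ends f).1 \in T) && ((ends f).2 \in T)].

Definition leaf (W : {set V}) (F : {set E}) (v : V) : bool :=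
  (v \in W) && (#|[set f in F | incident f v]| == 1)
  && [forall f in F, incident f v ==> ~~ is_loop f].

Inductive leaf_reduces : {set V} * {set E} -> {set V} * {set E} -> Prop :=
| lr_refl S : leaf_reduces S S
| lr_step W F v f S :
    leaf W F v -> f \in F -> incident f v ->
    leaf_reduces (W :\ v, F :\ f) S -> leaf_reduces (W, F) S.

Definition kernel_of (S K : {set V} * {set E}) : Prop :=
  leaf_reduces S K /\ (forall v, ~~ leaf K.1 K.2 v).

End Graphs.

(* Independent sets of M_k are the edge sets [J] with [#|Y| < #|Vof Y| + k] for
   every nonempty [Y \subset J]; for [k = 0] this says acyclic. Since leafless
   subgraphs survive leaf deletion, [e] lies in no leafless subgraph of the
   component [A]. Hence the ends of [e] are disconnected in [A :\ e], and its two
   components cannot both carry cycles: joined through [e] they would form a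
   leafless subgraph. Nor can both be forests: [A] would then be a forest, so
   either an edge outside [B] touching [A] could be added to the base, or a
   circuit through [e] would leave, outside [A], a set with too many edges.
   On the tree side [T], a counting argument shows that every edge outside [B]
   meeting [T] can be exchanged for [e], and that every base contains [e] or
   such an edge; together these identify the fundamental cocircuit. *)

From Pilot Require Import Defs.
From mathcomp Require Import all_boot zify.
Set Implicit Arguments. Unset Strict Implicit. Unset Printing Implicit Defensive.

Lemma setU1_glue (T : finType) (x : T) (A F : {set T}) :
  x |: A \subset F :|: (A :\: F) :|: [set x].
Proof.
rewrite [_ :|: [set x]]setUC; apply: setUS.
by rewrite -{1}(setID A F); apply: setSU; apply: subsetIr.
Qed.

Section Graphs.
Variables (V E : finType) (ends : E -> V * V).
Local Notation incident := (incident ends).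
Local Notation is_loop := (is_loop ends).
Local Notation Vof := (Vof ends).
Local Notation adj := (adj ends).
Local Notation deg := (deg ends).
Local Notation edges_in := (edges_in ends).
Implicit Types (A F J X Y Z C D S : {set E}) (T W : {set V}) (e f g : E) (c k : nat).

(** * Incidence and connectivity *)

Lemma incident_fst f : incident f (ends f).1.
Proof. by rewrite /incident eqxx. Qed.

Lemma incident_snd f : incident f (ends f).2.
Proof. by rewrite /incident eqxx orbT. Qed.

Lemma incident_mem (P : pred V) f v :
  incident f v -> P (ends f).1 -> P (ends f).2 -> P v.
Proof. by case/orP=> /eqP <-. Qed.

Lemma incident_other f v w z : incident f v -> incident f w -> incident f z ->
  w != v -> z != v -> w = z.
Proof.
rewrite /incident; case: (ends f) => p q /=.
by do ![case/orP=> /eqP ?; subst] => //=; rewrite ?eqxx.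
Qed.

Definition meets (T : {set V}) f := [exists v in T, incident f v].

Lemma meets_incident T f v : incident f v -> v \in T -> meets T f.
Proof. by move=> fv vT; apply/existsP; exists v; rewrite vT. Qed.

Lemma adjP F x y : reflect (exists2 f, f \in F &
   ((ends f).1 == x) && ((ends f).2 == y) || ((ends f).1 == y) && ((ends f).2 == x))
  (adj F x y).
Proof.
apply: (iffP existsP) => [[f /andP[fF H]]|[f fF H]]; first by exists f.
by exists f; rewrite fF.
Qed.

Lemma adj_sym F : symmetric (adj F).
Proof. by move=> x y; apply/adjP/adjP => -[f fF H]; exists f => //; rewrite orbC. Qed.

Lemma connect_adj_sym F : connect_sym (adj F).
Proof. exact: sym_connect_sym (adj_sym F). Qed.

Lemma adj_incident F x y :
  adj F x y -> exists2 f, f \in F & incident f x && incident f y.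
Proof.
case/adjP=> f fF H; exists f => //; rewrite /incident.
by case/orP: H => /andP[/eqP -> /eqP ->]; rewrite !eqxx ?orbT.
Qed.

Lemma adj_ends F f : f \in F -> adj F (ends f).1 (ends f).2.
Proof. by move=> fF; apply/adjP; exists f; rewrite ?eqxx. Qed.

Lemma connectS F F' : F \subset F' -> subrel (connect (adj F)) (connect (adj F')).
Proof.
move=> /subsetP sF; apply: connect_sub => x y /adjP[f fF H].
by apply: connect1; apply/adjP; exists f; first exact: sF.
Qed.

Lemma connect_ends F f x :
  f \in F -> connect (adj F) x (ends f).1 = connect (adj F) x (ends f).2.
Proof.
move=> fF; apply/idP/idP => H; apply: connect_trans H (connect1 _).
  exact: adj_ends.
by rewrite adj_sym; apply: adj_ends.
Qed.

Lemma connect_ind (r : rel V) (P : V -> Prop) x :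
  P x -> (forall u w, P u -> r u w -> P w) -> forall y, connect r x y -> P y.
Proof.
move=> Px step y /connectP[p pth ->].
elim: p x Px pth => [|z p IH] x Px //= /andP[rxz pth].
exact: IH (step _ _ Px rxz) pth.
Qed.

Lemma connect_incident F x y :
  connect (adj F) x y -> x != y -> exists2 f, f \in F & incident f y.
Proof.
move=> cxy nxy.
suff : y = x \/ exists2 f, f \in F & incident f y by case=> [yx|//]; rewrite yx eqxx in nxy.
move: y cxy {nxy}; apply: connect_ind; first by left.
by move=> u w _ /adj_incident[f fF /andP[_ fw]]; right; exists f.
Qed.

Lemma connect_delete_leaf F f v x y : f \in F -> incident f v ->
  (forall g, g \in F -> incident g v -> g = f) ->
  x != v -> y != v -> connect (adj F) x y -> connect (adj (F :\ f)) x y.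
Proof.
move=> fF fv uniq xv yv cxy.
set D := connect (adj (F :\ f)) x.
have noDv : ~ D v.
  move=> Dv; case: (connect_incident Dv xv) => g; rewrite !inE => /andP[gf gF] gv.
  by rewrite (uniq g gF gv) eqxx in gf.
have : D y \/ (y = v /\ exists2 w, incident f w & D w).
  move: y cxy {yv}; apply: connect_ind; first by left; exact: connect0.
  move=> u w Pu /adjP[g gF H].
  have [gu gw] : incident g u /\ incident g w.
    by case/orP: H => /andP[/eqP <- /eqP <-]; rewrite incident_fst incident_snd.
  case: Pu => [Du | [uv [w' fw' Dw']]].
    have uv : u != v by apply: contraPneq noDv => <-.
    have [gf | gf] := eqVneq g f.
      subst g; have [wv | wv] := eqVneq w v; first by right; split=> //; exists u.
      by left; rewrite -(incident_other fv gu gw uv wv).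
    left; apply: connect_trans Du (connect1 _).
    by apply/adjP; exists g => //; rewrite !inE gf gF.
  subst u; have gf := uniq g gF gu; subst g.
  have [wv | wv] := eqVneq w v; first by right; split=> //; exists w'.
  have w'v : w' != v by apply: contraPneq noDv => <-.
  by left; rewrite -(incident_other fv fw' gw w'v wv).
by case=> // -[yv']; rewrite yv' eqxx in yv.
Qed.

Lemma connect_delete_edge F e x : e \in F -> connect (adj F) (ends e).1 x ->
  connect (adj (F :\ e)) (ends e).1 x || connect (adj (F :\ e)) (ends e).2 x.
Proof.
move=> eF; move: x; apply: connect_ind => [|u w cu /adjP[g gF H]].
  by rewrite connect0.
have [ge | ge] := eqVneq g e.
  by subst g; case/orP: H => /andP[/eqP -> /eqP ->]; rewrite connect0 ?orbT.
have uw : adj (F :\ e) u w by apply/adjP; exists g; rewrite // !inE ge.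
by case/orP: cu => c; apply/orP; [left|right]; apply: connect_trans c (connect1 uw).
Qed.

Lemma connect_edges_in F (T : {set V}) t x : t \in T ->
  (forall y, connect (adj F) t y -> y \in T) ->
  connect (adj F) t x -> connect (adj (edges_in F T)) t x.
Proof.
move=> tT inT ctx.
suff [] : connect (adj F) t x /\ connect (adj (edges_in F T)) t x by [].
move: x ctx; apply: connect_ind; first by rewrite !connect0.
move=> u w [ctu ctTu] uw; have ctw := connect_trans ctu (connect1 uw).
split=> //; apply: connect_trans ctTu (connect1 _).
case/adjP: uw => g gF H; apply/adjP; exists g => //.
by rewrite inE gF; case/orP: H => /andP[/eqP -> /eqP ->]; rewrite !inT.
Qed.

Lemma VofP X v : reflect (exists2 f, f \in X & incident f v) (v \in Vof X).
Proof.
rewrite inE; apply: (iffP existsP) => [[f /andP[]]|[f fX fv]]; first by exists f.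
by exists f; rewrite fX.
Qed.

Lemma VofS X Y : X \subset Y -> Vof X \subset Vof Y.
Proof.
move=> /subsetP sXY; apply/subsetP => v /VofP[f fX fv]; apply/VofP.
by exists f => //; apply: sXY.
Qed.

Lemma VofU X Y : Vof (X :|: Y) = Vof X :|: Vof Y.
Proof.
apply/setP => v; apply/VofP/setUP => [[f /setUP[fX|fY] fv]|[]/VofP[f fZ fv]].
- by left; apply/VofP; exists f.
- by right; apply/VofP; exists f.
- by exists f; rewrite // inE fZ.
- by exists f; rewrite // inE fZ orbT.
Qed.

Lemma card_VofU X Y : Vof X :&: Vof Y = set0 ->
  #|Vof (X :|: Y)| = #|Vof X| + #|Vof Y|.
Proof. by move=> dis; rewrite VofU cardsU dis cards0 subn0. Qed.

Lemma Vof_fst X f : f \in X -> (ends f).1 \in Vof X.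
Proof. by move=> fX; apply/VofP; exists f; rewrite ?incident_fst. Qed.

Lemma card_Vof_gt0 X : X != set0 -> 0 < #|Vof X|.
Proof. by case/set0Pn=> f fX; apply/card_gt0P; exists (ends f).1; apply: Vof_fst. Qed.

(** * Sparse sets and the matroid [M_k] *)

Definition overfull (c : nat) X := (X != set0) && (#|Vof X| + c <= #|X|).

Definition sparse (c : nat) F :=
  forall Y, Y \subset F -> Y != set0 -> #|Y| < #|Vof Y| + c.

Lemma sparseP c F :
  reflect (sparse c F) [forall Y : {set E}, (Y \subset F) ==> ~~ overfull c Y].
Proof.
apply: (iffP forallP) => [H Y sY nY | sp Y].
  by have := H Y; rewrite sY /overfull nY -ltnNge.
apply/implyP => sY; apply/nandP; have [->|nY] := eqVneq Y set0; first by left.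
by right; rewrite -ltnNge; apply: sp.
Qed.

Lemma sparse_overfullF c F Y : sparse c F -> Y \subset F -> overfull c Y -> False.
Proof. by move=> sp sY /andP[nY]; rewrite leqNgt (sp Y sY nY). Qed.

Lemma sparsePn c F : ~ sparse c F -> exists2 Y : {set E}, Y \subset F & overfull c Y.
Proof. by move/sparseP/forallPn=> [Y]; rewrite negb_imply negbK => /andP[]; exists Y. Qed.

Lemma sparseS c F F' : F \subset F' -> sparse c F' -> sparse c F.
Proof. by move=> sF sp Y sY; apply: sp; apply: subset_trans sF. Qed.

(* [g] may close a cycle of the forest [F] only when [0 < c]. *)
Lemma sparse_glue c T F J g :
  sparse 0 F -> (forall f v, f \in F -> incident f v -> v \in T) ->
  sparse c J -> (forall f v, f \in J -> incident f v -> v \notin T) ->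
  meets T g -> (0 < c) || meets (~: T) g -> sparse c (F :|: J :|: [set g]).
Proof.
move=> spF FT spJ JT gT hc Y sY nY.
have hY : #|Y| <= #|Y :&: F| + #|Y :&: J| + (g \in Y).
  rewrite (cardsD1 g Y) addnC leq_add2r; apply: leq_trans (leq_card_setU _ _).1.
  apply/subset_leq_card/subsetP => x /setD1P[xg xY]; move/subsetP/(_ x xY): sY.
  by rewrite !inE (negbTE xg) orbF xY => /orP[] ->; rewrite ?orbT.
have hV : #|Vof Y :&: T| + #|Vof Y :\: T| = #|Vof Y| := cardsID T (Vof Y).
have inF : (g \in Y) || (Y :&: F != set0) -> #|Y :&: F| < #|Vof Y :&: T|.
  have sV : Vof (Y :&: F) \subset Vof Y :&: T.
    apply/subsetP => v /VofP[f /setIP[fY fF] fv].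
    by rewrite in_setI (FT f v fF fv) andbT; apply/VofP; exists f.
  have [->|n1] := eqVneq (Y :&: F) set0; last first.
    by move=> _; have := spF _ (subsetIr _ _) n1; have := subset_leq_card sV; lia.
  rewrite orbF cards0 card_gt0 => gY; case/existsP: gT => v /andP[vT gv].
  by apply/set0Pn; exists v; rewrite in_setI vT andbT; apply/VofP; exists g.
have inJ : (g \in Y) || (Y :&: J != set0) -> #|Y :&: J| < #|Vof Y :\: T| + c.
  have sV : Vof (Y :&: J) \subset Vof Y :\: T.
    apply/subsetP => v /VofP[f /setIP[fY fJ] fv].
    by rewrite in_setD (JT f v fJ fv); apply/VofP; exists f.
  have [->|n2] := eqVneq (Y :&: J) set0; last first.
    by move=> _; have := spJ _ (subsetIr _ _) n2; have := subset_leq_card sV; lia.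
  rewrite orbF cards0 addn_gt0 card_gt0 => gY.
  case/orP: hc => [->|/existsP[v /andP[vT gv]]]; first by rewrite orbT.
  by apply/orP; left; apply/set0Pn; exists v; rewrite in_setD -in_setC vT; apply/VofP; exists g.
have [gY|gY] := boolP (g \in Y).
  by rewrite gY /= in hY inF inJ; have := inF isT; have := inJ isT; lia.
rewrite (negbTE gY) addn0 in hY; rewrite (negbTE gY) /= in inF inJ.
have [e1|n1] := eqVneq (Y :&: F) set0; have [e2|n2] := eqVneq (Y :&: J) set0.
- by move: hY; rewrite e1 e2 !cards0 leqn0 cards_eq0 (negbTE nY).
- by have := inJ n2; move: hY; rewrite e1 cards0; lia.
- by have := inF n1; move: hY; rewrite e2 cards0; lia.
- by have := inF n1; have := inJ n2; lia.
Qed.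

Lemma minset_overfull_card k C : minset (overfull k) C -> #|C| = #|Vof C| + k.
Proof.
move=> /minsetP[/andP[nC dC] minC]; apply/eqP; rewrite eqn_leq dC andbT leqNgt.
apply/negP => gt; case/set0Pn: (nC) => f fC.
have hD := cardsD1 f C; rewrite fC in hD.
have hV : #|Vof (C :\ f)| <= #|Vof C| by apply/subset_leq_card/VofS/subsetDl.
have hV0 := card_Vof_gt0 nC.
have nD : C :\ f != set0 by rewrite -card_gt0; lia.
have /minC eqC : overfull k (C :\ f) by rewrite /overfull nD /=; lia.
by move: fC; rewrite -(eqC (subsetDl _ _)) !inE eqxx.
Qed.

Lemma minset_overfull_circuit k C : minset (overfull k) C -> Mk_circuit ends k C.
Proof.
move=> mC; have eC := minset_overfull_card mC.
case/minsetP: mC => /andP[nC _] minC; apply/minsetP; split; first by rewrite nC eC eqxx.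
by move=> X /andP[nX /eqP eX] sXC; apply: minC sXC; rewrite /overfull nX eX leqnn.
Qed.

Lemma Mk_circuit_overfull k C : Mk_circuit ends k C -> overfull k C.
Proof. by case/minsetP=> /andP[nC /eqP eC] _; rewrite /overfull nC eC leqnn. Qed.

Lemma overfull_circuit k Y :
  overfull k Y -> exists2 C : {set E}, C \subset Y & Mk_circuit ends k C.
Proof. by move=> /minset_exists[C /minset_overfull_circuit cC sCY]; exists C. Qed.

Lemma Mk_circuit_min k C Y : Mk_circuit ends k C -> Y \subset C -> overfull k Y -> Y = C.
Proof.
move=> /minsetP[_ minC] sYC /overfull_circuit[C' sC'Y /minsetP[PC' _]].
have eC' := minC C' PC' (subset_trans sC'Y sYC).
by apply/eqP; rewrite eqEsubset sYC -eC' sC'Y.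
Qed.

Lemma Mk_indepP k I : reflect (sparse k I) (Mk_indep ends k I).
Proof.
apply: (iffP forallP) => [ind Y sY nY | sp C].
  rewrite ltnNge; apply/negP => dY.
  have /overfull_circuit[C sCY cC] : overfull k Y by rewrite /overfull nY.
  by have := ind C; rewrite (subset_trans sCY sY) cC.
by apply/implyP => sC; apply/negP => /Mk_circuit_overfull; apply: sparse_overfullF sp sC.
Qed.

Lemma Mk_base_sparse k B : Mk_base ends k B -> sparse k B.
Proof. by case/maxsetP => /Mk_indepP. Qed.

Lemma Mk_base_add k B u : Mk_base ends k B -> u \notin B ->
  exists2 Z : {set E}, Z \subset u |: B & overfull k Z.
Proof.
move=> /maxsetP[_ maxB] uB; apply: sparsePn => /Mk_indepP/maxB/(_ (subsetUr _ _)) eqB.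
by move: uB; rewrite -eqB setU11.
Qed.

(* Circuit elimination, from submodularity of [#|Vof _|]. *)
Lemma overfull_elim k Y Z e : sparse k (Y :&: Z) -> e \in Y :&: Z ->
  overfull k Y -> overfull k Z -> overfull k ((Y :|: Z) :\ e).
Proof.
move=> spI eI /andP[nY dY] /andP[_ dZ].
have hY := card_Vof_gt0 nY.
have hI : #|Y :&: Z| < #|Vof (Y :&: Z)| + k by apply: spI => //; apply/set0Pn; exists e.
have hVI : #|Vof (Y :&: Z)| <= #|Vof Y :&: Vof Z|.
  by apply: subset_leq_card; rewrite subsetI !VofS ?subsetIl ?subsetIr.
have hVD : #|Vof ((Y :|: Z) :\ e)| <= #|Vof Y :|: Vof Z|.
  by rewrite -VofU; apply/subset_leq_card/VofS/subsetDl.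
have hD := cardsD1 e (Y :|: Z); rewrite inE (setIP eI).1 /= in hD.
have hU := cardsUI Y Z; have hV := cardsUI (Vof Y) (Vof Z).
have hIZ := subset_leq_card (subsetIr (Vof Y) (Vof Z)).
by rewrite /overfull -card_gt0; apply/andP; split; lia.
Qed.

Lemma sparse_overfull_mem c J Z x :
  sparse c J -> Z \subset x |: J -> overfull c Z -> x \in Z.
Proof.
move=> spJ /subsetP sZ oZ; apply: contraT => xZ; exfalso; apply: sparse_overfullF spJ _ oZ.
by apply/subsetP => y yZ; case/setU1P: (sZ y yZ) => [yx|//]; rewrite -yx yZ in xZ.
Qed.

Lemma Mk_base_exchange k B e u : Mk_base ends k B -> e \in B -> u \notin B ->
  Mk_indep ends k (u |: (B :\ e)) -> Mk_base ends k (u |: (B :\ e)).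
Proof.
move=> baseB eB uB indB'; have /Mk_indepP spB' := indB'.
apply/maxsetP; split=> // Y /Mk_indepP spY sB'Y.
apply/eqP; rewrite eqEsubset sB'Y andbT; apply/subsetP => f fY; apply: contraT => fB'; exfalso.
have spB := Mk_base_sparse baseB.
have [Z sZ oZ] := Mk_base_add baseB uB.
have eZ : e \in Z by apply: sparse_overfull_mem spB' _ oZ; rewrite setUCA (setD1K eB).
have [fe | fe] := eqVneq f e.
  apply: (sparse_overfullF spY _ oZ); apply: subset_trans sZ _.
  by rewrite -(setD1K eB) setUCA subUset sub1set sB'Y andbT -fe.
have fB : f \notin B by apply: contraNN fB' => fB; rewrite !inE fe fB orbT.
have fu : f != u by apply: contraNneq fB' => ->; rewrite setU11.
have [Y1 sY1 oY1] := Mk_base_add baseB fB.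
have fY1 : f \in Y1 := sparse_overfull_mem spB sY1 oY1.
have fB'Y : f |: (B :\ e) \subset Y.
  by rewrite subUset sub1set fY (subset_trans _ sB'Y) ?subsetUr.
have eY1 : e \in Y1.
  by apply: sparse_overfull_mem (sparseS fB'Y spY) _ oY1; rewrite setUCA (setD1K eB).
have sI : Y1 :&: Z \subset B.
  apply/subsetP => x /setIP[/(subsetP sY1) xY1 /(subsetP sZ) xZ].
  move: xY1 xZ; rewrite !inE => /orP[/eqP-> /orP[/eqP fu'|//]|//].
  by rewrite fu' eqxx in fu.
have eI : e \in Y1 :&: Z by rewrite inE eY1.
apply: sparse_overfullF spY _ (overfull_elim (sparseS sI spB) eI oY1 oZ).
apply/subsetP => x; rewrite !inE => /andP[xe xYZ].
have [-> // | xf] := eqVneq x f.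
apply: (subsetP sB'Y); rewrite !inE xe /=.
case/orP: xYZ => [/(subsetP sY1)|/(subsetP sZ)]; rewrite !inE ?(negbTE xf) //=.
by move=> ->; rewrite orbT.
Qed.

Lemma Mk_cocircuit_fundamental k B e X :
  Mk_base ends k B -> e \in B -> X :&: B = [set e] ->
  (forall u, u \in X -> u != e -> Mk_base ends k (u |: (B :\ e))) ->
  (forall B', Mk_base ends k B' -> X :&: B' != set0) ->
  [/\ Mk_cocircuit ends k X, X :&: B = [set e] &
      forall K, Mk_cocircuit ends k K -> K :&: B = [set e] -> K = X].
Proof.
move=> baseB eB XB exchX meetX.
have minX K : (forall B', Mk_base ends k B' -> K :&: B' != set0) ->
    K :&: B \subset [set e] -> X \subset K.
  move=> meetK sK; apply/subsetP => x xX.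
  have [->|xe] := eqVneq x e.
    case/set0Pn: (meetK B baseB) => y yKB; move/subsetP/(_ y yKB): sK; rewrite inE => /eqP ye.
    by move: yKB; rewrite ye inE => /andP[].
  case/set0Pn: (meetK _ (exchX x xX xe)) => y.
  rewrite !inE => /andP[yK /orP[/eqP <- //|/andP[ye yB]]].
  by move/subsetP/(_ y): sK; rewrite !inE yK yB (negbTE ye) => /(_ isT).
have meetsAll K : [forall B0, Mk_base ends k B0 ==> (K :&: B0 != set0)] ->
    forall B', Mk_base ends k B' -> K :&: B' != set0.
  by move=> /forallP meetK B' baseB'; apply: (implyP (meetK B')).
have cX : Mk_cocircuit ends k X.
  apply/minsetP; split=> [|X' /meetsAll meetX' sX'].
    by apply/forallP => B0; apply/implyP; apply: meetX.
  by apply/eqP; rewrite eqEsubset sX' minX // -XB; apply: setSI.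
split=> // K /minsetP[/meetsAll meetK minK] KB.
by apply/esym/minK; rewrite ?minX ?KB //; apply/forallP => B0; apply/implyP; apply: meetX.
Qed.

Lemma Mk_cocircuit_star k B e T : 0 < k -> Mk_base ends k B -> e \in B -> meets T e ->
  (forall f, f \in B :\ e -> meets T f -> ((ends f).1 \in T) && ((ends f).2 \in T)) ->
  sparse 0 [set f in B :\ e | meets T f] ->
  let X := e |: [set u in ~: B | meets T u] in
  [/\ Mk_cocircuit ends k X, X :&: B = [set e] &
      forall K, Mk_cocircuit ends k K -> K :&: B = [set e] -> K = X].
Proof.
move=> k_gt0 baseB eB eT closedT; set F := [set f in B :\ e | meets T f] => spF X.
have inT f v : f \in F -> incident f v -> v \in T.
  by rewrite inE => /andP[fB /(closedT f fB)/andP[f1 f2]] fv; apply: incident_mem fv f1 f2.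
have XB : X :&: B = [set e].
  apply/setP => x; rewrite !inE; have [->|xe] := eqVneq x e; first by rewrite eB.
  by case: (x \in B); rewrite ?andbF.
apply: Mk_cocircuit_fundamental => // [u|B' baseB'].
  rewrite !inE => /orP[/eqP->|/andP[uB uT]]; first by rewrite eqxx.
  move=> _; apply: Mk_base_exchange => //; apply/Mk_indepP.
  apply: sparseS (setU1_glue u (B :\ e) F) (sparse_glue spF inT _ _ uT _).
  - exact: sparseS (subset_trans (subsetDl _ _) (subsetDl _ _)) (Mk_base_sparse baseB).
  - move=> f v; rewrite inE => /andP[fF fB] fv; apply: contra fF => vT.
    by rewrite inE fB; apply: meets_incident fv vT.
  - by rewrite k_gt0.
apply/negP => /eqP XB'0.
have notX f : f \in B' -> f \notin X.
  by move=> fB'; apply/negP => fX; move/setP/(_ f): XB'0; rewrite in_setI in_set0 fX fB'.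
have eB' : e \notin B' by apply: contraL (notX e) _; rewrite /X setU11.
set F' := [set f in B' | meets T f].
have F'F : F' \subset F.
  apply/subsetP => f; rewrite !inE => /andP[fB' fT]; move: (notX f fB').
  by rewrite !inE fT andbT negb_or negbK => /andP[-> ->].
have [Z sZ oZ] := Mk_base_add baseB' eB'; apply: sparse_overfullF _ sZ oZ.
apply: sparseS (setU1_glue e B' F') (sparse_glue (sparseS F'F spF) _ _ _ eT _).
- by move=> f v /(subsetP F'F); apply: inT.
- exact: sparseS (subsetDl _ _) (Mk_base_sparse baseB').
- move=> f v; rewrite inE => /andP[fF' fB'] fv; apply: contra fF' => vT.
  by rewrite inE fB'; apply: meets_incident fv vT.
- by rewrite k_gt0.
Qed.

(** * Leaves, cycles and forests *)

Definition leafless D := forall f v, f \in D -> incident f v ->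
  is_loop f \/ exists2 g, g \in D & (g != f) && incident g v.

Lemma leafless_intro D :
  (forall f v, f \in D -> incident f v -> ~~ is_loop f ->
     (forall g, g \in D -> incident g v -> g = f) -> False) -> leafless D.
Proof.
move=> noleaf f v fD fv; have [lf|nlf] := boolP (is_loop f); first by left.
have [/existsP[g /andP[gD H]]|/existsPn noG] := boolP [exists g in D, (g != f) && incident g v].
  by right; exists g.
exfalso; apply: (noleaf f v fD fv nlf) => g gD gv.
by have := noG g; rewrite gD gv andbT /= negbK => /eqP.
Qed.

Lemma leafless0 : leafless set0.
Proof. by move=> f v; rewrite inE. Qed.

Lemma leaflessU D1 D2 : leafless D1 -> leafless D2 -> leafless (D1 :|: D2).
Proof.
move=> l1 l2 f v /setUP[fD|fD] fv; [case: (l1 f v fD fv)|case: (l2 f v fD fv)];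
  (by left) || by case=> g gD H; right; exists g; rewrite // inE gD ?orbT.
Qed.

Lemma leafless_kernel (S K : {set V} * {set E}) D : leaf_reduces ends S K ->
  D \subset S.2 -> leafless D -> D \subset K.2.
Proof.
elim=> [S'//|W F v f S' lf fF fv _ IH] /= sD lD; apply: IH => //=.
apply/subsetP => g gD; rewrite !inE (subsetP sD g gD) andbT.
apply/negP => /eqP gf; subst g.
move: lf; rewrite /leaf => /andP[/andP[_ /cards1P[x ex]] /forallP nl].
case: (lD f v gD fv) => [lp|[g gD' /andP[gf gv]]]; first by have := nl f; rewrite fF fv lp.
have : f \in [set f0 in F | incident f0 v] by rewrite inE fF fv.
have : g \in [set f0 in F | incident f0 v] by rewrite inE (subsetP sD g gD') gv.
by rewrite ex !inE => /eqP gx /eqP fx; rewrite gx fx eqxx in gf.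
Qed.

Lemma minset_overfull0_leafless D : minset (overfull 0) D -> leafless D.
Proof.
move=> mD; have := minset_overfull_card mD; rewrite addn0 => eqD.
case/minsetP: mD => _ minD; apply: leafless_intro => f v fD fv nlf uniq.
have vD : v \in Vof D by apply/VofP; exists f.
have sV : Vof (D :\ f) \subset Vof D :\ v.
  apply/subsetP => w /VofP[g]; rewrite !in_setD1 => /andP[gf gD] gw.
  apply/andP; split; last by apply/VofP; exists g.
  by apply: contraNneq gf => wv; rewrite (uniq g gD) ?eqxx // -wv.
have h1 := cardsD1 v (Vof D); rewrite vD in h1.
have h2 := cardsD1 f D; rewrite fD in h2.
have h3 := subset_leq_card sV.
have [D'0|nD'] := eqVneq (D :\ f) set0.
  have : [set (ends f).1; (ends f).2] \subset Vof D.
    by apply/subsetP => w /set2P[]->; apply/VofP; exists f; rewrite ?incident_fst ?incident_snd.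
  by move/subset_leq_card; rewrite cards2 nlf D'0 cards0 in h2 *; lia.
have /minD/(_ (subsetDl _ _)) eqD' : overfull 0 (D :\ f) by rewrite /overfull nD'; lia.
by move: fD; rewrite -eqD' !inE eqxx.
Qed.

(* A minimal [D] with [#|Vof D| <= #|D|] cannot split into two vertex-disjoint parts. *)
Lemma minset_overfull0_closed D (P : pred V) : minset (overfull 0) D ->
  (forall f, f \in D -> P (ends f).1 = P (ends f).2) ->
  forall f g, f \in D -> g \in D -> P (ends f).1 -> P (ends g).1.
Proof.
move=> mD closedP f g fD gD Pf; apply: contraT => nPg.
have := minset_overfull_card mD; rewrite addn0 => eqD.
case/minsetP: mD => _ minD.
set D1 := [set h in D | P (ends h).1]; set D2 := D :\: D1.
have sD1 : D1 \subset D by apply/subsetP => h; rewrite inE => /andP[].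
have inP h v : h \in D -> incident h v -> P v = P (ends h).1.
  by move=> hD /orP[] /eqP <-; rewrite ?closedP.
have dis : Vof D1 :&: Vof D2 = set0.
  apply/setP => v; rewrite in_setI in_set0; apply/negP => /andP[/VofP[h h1 hv] /VofP[h' h2 h'v]].
  move: h1 h2; rewrite !inE => /andP[hD Ph] /andP[nh' h'D]; rewrite h'D /= in nh'.
  by move: nh'; rewrite -(inP h' v) // (inP h v) // Ph.
have hD : #|D1| + #|D2| = #|D| by rewrite -(cardsID D1 D) (setIidPr sD1).
have UD : D1 :|: D2 = D by rewrite -{1}(setIidPr sD1) /D2 setID.
have hV : #|Vof D1| + #|Vof D2| = #|Vof D| by rewrite -card_VofU // UD.
have n1 : D1 != set0 by apply/set0Pn; exists f; rewrite inE fD.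
have n2 : D2 != set0 by apply/set0Pn; exists g; rewrite !inE gD (negbTE nPg).
have [o1|o2] : overfull 0 D1 \/ overfull 0 D2.
  rewrite /overfull n1 n2 !addn0 /=.
  by case: (leqP #|Vof D1| #|D1|) => ?; [left|right]; lia.
  by move: gD; rewrite -(minD _ o1 sD1) inE (negbTE nPg) andbF.
by move: (fD); rewrite -(minD _ o2 (subsetDl _ _)) !inE fD Pf.
Qed.

Lemma minset_overfull0_connected D x y : minset (overfull 0) D ->
  x \in Vof D -> y \in Vof D -> connect (adj D) x y.
Proof.
move=> mD /VofP[f fD fx] /VofP[g gD gy].
have Pf : connect (adj D) x (ends f).1.
  by case/orP: fx => /eqP <-; rewrite ?connect0 // (connect_ends _ fD) connect0.
have Pg := minset_overfull0_closed mD (fun h hD => connect_ends x hD) fD gD Pf.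
by apply: (incident_mem (P := connect (adj D) x) gy Pg); rewrite -(connect_ends x gD).
Qed.

Lemma handshake C : \sum_(v : V) deg C v = 2 * #|C|.
Proof.
rewrite /Defs.deg exchange_big /= -sum1_card big_distrr /=.
apply: eq_bigr => f _; rewrite big_split /= muln1.
have s1 w : \sum_(v : V) (w == v) = 1.
  by rewrite (bigD1 w) //= eqxx big1 // => v /negbTE vw; rewrite eq_sym vw.
by rewrite !s1.
Qed.

Lemma deg_eq0 C v : v \notin Vof C -> deg C v = 0.
Proof.
move=> nv; apply: big1 => f fC; apply/eqP; rewrite addn_eq0 !eqb0.
by apply/andP; split; apply: contra nv => H; apply/VofP; exists f; rewrite // /incident H ?orbT.
Qed.

Lemma sum_deg_Vof C : \sum_(v in Vof C) deg C v = 2 * #|C|.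
Proof.
rewrite -handshake [RHS](bigID (mem (Vof C))) /= [X in _ = _ + X]big1 ?addn0 //.
by move=> v; apply: deg_eq0.
Qed.

Lemma graph_cycle_card C : graph_cycle ends C -> #|C| = #|Vof C|.
Proof.
case=> _ [_ d2]; have := sum_deg_Vof C.
by rewrite (eq_bigr (fun _ => 2)) ?sum_nat_const //; lia.
Qed.

Lemma leafless_deg D v : leafless D -> v \in Vof D -> 1 < deg D v.
Proof.
move=> lD /VofP[f fD fv]; rewrite /Defs.deg (bigD1 f) //=.
have inc1 h : incident h v -> 0 < ((ends h).1 == v) + ((ends h).2 == v).
  by case/orP => ->; rewrite ?addn1.
case: (lD f v fD fv) => [lp|[g gD /andP[gf gv]]].
  by move: fv lp; rewrite /incident /Defs.is_loop => /orP[]/eqP -> /eqP ->; rewrite eqxx; lia.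
rewrite (bigD1 g) /=; last by rewrite gD gf.
by have := inc1 f fv; have := inc1 g gv; lia.
Qed.

Lemma minset_overfull0_cycle D : minset (overfull 0) D -> graph_cycle ends D.
Proof.
move=> mD; have lD := minset_overfull0_leafless mD.
have := minset_overfull_card mD; rewrite addn0 => eqD.
split; first by case/minsetP: mD => /andP[].
split=> [x y|v vD]; first exact: minset_overfull0_connected.
apply/eqP; rewrite eqn_leq (leafless_deg lD vD) andbT.
have : \sum_(w in Vof D) (deg D w - 2) == 0.
  have := sum_deg_Vof D; rewrite eqD.
  rewrite (eq_bigr (fun w => (deg D w - 2) + 2)) => [|w wD]; last by rewrite subnK ?leafless_deg.
  by rewrite big_split sum_nat_const /= => ?; apply/eqP; lia.
by rewrite sum_nat_eq0 => /forallP /(_ v); rewrite vD /= subn_eq0.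
Qed.

Lemma forest_is_tree W F : (exists x, x \in W) ->
  (forall x y, x \in W -> y \in W -> connect (adj F) x y) -> sparse 0 F -> is_tree ends W F.
Proof.
move=> neW connW spF; split=> //; split=> // C sC cycC.
have := graph_cycle_card cycC; have := spF C sC (proj1 cycC); rewrite addn0; lia.
Qed.

Lemma not_forest_minset F : ~ sparse 0 F -> exists2 D, minset (overfull 0) D & D \subset F.
Proof.
by move/sparsePn=> [Y sY /minset_exists[D mD sD]]; exists D => //; apply: subset_trans sY.
Qed.

Lemma not_forest_not_tree W F : ~ sparse 0 F -> ~ is_tree ends W F.
Proof.
move/not_forest_minset=> [D mD sD] [_ [_ acyclic]].
exact: acyclic sD (minset_overfull0_cycle mD).
Qed.

Lemma anchored_end_edge S D e t t' z : e \in S -> D \subset S -> e \notin D ->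
  t != t' -> z \in t' |: Vof D -> connect (adj (S :\ e)) t z ->
  exists2 g, g \in S & (g != e) && incident g t.
Proof.
move=> eS sDS eD tt' zD ctz; have [zt|zt] := eqVneq z t.
  move: zD; rewrite in_setU1 zt (negbTE tt') => /VofP[h hD ht].
  by exists h; rewrite ?(subsetP sDS) // ht andbT; apply: contraNneq eD => <-.
rewrite connect_adj_sym in ctz; case: (connect_incident ctz zt) => g.
by rewrite !inE => /andP[ge gS] gt; exists g; rewrite ?ge.
Qed.

(* Take [S] minimal with these properties: deleting a leaf edge of [S] would
   preserve all of them. *)
Lemma leafless_connector A D e x y :
  e \in A -> D \subset A -> leafless D ->
  x \in (ends e).2 |: Vof D -> y \in (ends e).1 |: Vof D ->
  connect (adj (A :\ e)) (ends e).1 x -> connect (adj (A :\ e)) (ends e).2 y ->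
  exists S, [/\ S \subset A, e \in S & leafless S].
Proof.
move=> eA sDA lD xD yD cx cy.
pose Q S := [&& e \in S, S \subset A, D \subset S,
  connect (adj (S :\ e)) (ends e).1 x & connect (adj (S :\ e)) (ends e).2 y].
have /minset_exists[S /minsetP[/and5P[eS sSA sDS cSx cSy] minS] _] : Q A.
  by rewrite /Q eA subxx sDA cx.
exists S; split=> //; apply: leafless_intro => f v fS fv nlf uniq.
have fD : f \notin D.
  apply/negP => fD; case: (lD f v fD fv) => [lf|[g gD /andP[gf gv]]].
    by rewrite lf in nlf.
  by rewrite (uniq g (subsetP sDS g gD) gv) eqxx in gf.
have [fe|fe] := eqVneq f e.
  subst f; case/orP: fv => /eqP ev; subst v.
    have [g gS /andP[ge gv]] := anchored_end_edge eS sDS fD nlf xD cSx.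
    by rewrite (uniq g gS gv) eqxx in ge.
  have ba : (ends e).2 != (ends e).1 by rewrite eq_sym.
  have [g gS /andP[ge gv]] := anchored_end_edge eS sDS fD ba yD cSy.
  by rewrite (uniq g gS gv) eqxx in ge.
have off z g : g \in S -> incident g z -> g != f -> z != v.
  by move=> gS gz gf; apply: contraNneq gf => zv; rewrite (uniq g gS) // -zv.
have anchored z t : incident e t -> z \in t |: Vof D -> z != v.
  move=> et; rewrite in_setU1 => /orP[/eqP->|/VofP[h hD hz]].
    by apply: off et _; rewrite // eq_sym.
  by apply: off (subsetP sDS h hD) hz _; apply: contraNneq fD => <-.
have uniq' g : g \in S :\ e -> incident g v -> g = f.
  by rewrite inE => /andP[_]; apply: uniq.
have fSe : f \in S :\ e by rewrite !inE fe.
have QSf : Q (S :\ f).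
  rewrite /Q !inE eq_sym fe eS (subset_trans (subsetDl _ _) sSA) subsetD1 sDS fD /=.
  rewrite !setDDl setUC -setDDl; apply/andP; split.
    apply: connect_delete_leaf fSe fv uniq' _ _ cSx.
      by apply: off eS (incident_fst e) _; rewrite eq_sym.
    exact: anchored (incident_snd e) xD.
  apply: connect_delete_leaf fSe fv uniq' _ _ cSy.
    by apply: off eS (incident_snd e) _; rewrite eq_sym.
  exact: anchored (incident_fst e) yD.
by move: fS; rewrite -(minS _ QSf (subsetDl _ _)) !inE eqxx.
Qed.

(** * The component of a base containing [e] *)

Definition comp_of W F x : {set V} := [set y in W | connect (adj F) x y].

Lemma mem_comp_of W F x y : (y \in comp_of W F x) = (y \in W) && connect (adj F) x y.
Proof. by rewrite inE. Qed.

Lemma mem_edges_in F T f :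
  (f \in edges_in F T) = (f \in F) && ((ends f).1 \in T) && ((ends f).2 \in T).
Proof. by rewrite inE andbA. Qed.

Section BaseComponent.
Variables (k : nat) (B : {set E}) (e : E).
Hypotheses (baseB : Mk_base ends k B) (eB : e \in B).

Local Notation a := (ends e).1.
Local Notation b := (ends e).2.
Local Notation W := (compV ends B e).
Local Notation A := (compE ends B e).
Local Notation A' := (compE ends B e :\ e).

Lemma mem_compV v : (v \in W) = connect (adj B) a v.
Proof. by rewrite inE. Qed.

Lemma compV_fst : a \in W.
Proof. by rewrite mem_compV connect0. Qed.

Lemma compV_ends f : f \in B -> ((ends f).1 \in W) = ((ends f).2 \in W).
Proof. by move=> fB; rewrite !mem_compV (connect_ends _ fB). Qed.

Lemma compV_snd : b \in W.
Proof. by rewrite -(compV_ends eB) compV_fst. Qed.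

Lemma mem_compE f : (f \in A) = (f \in B) && ((ends f).1 \in W).
Proof. by rewrite inE. Qed.

Lemma e_compE : e \in A.
Proof. by rewrite mem_compE eB compV_fst. Qed.

Lemma compE_in_compV f v : f \in A -> incident f v -> v \in W.
Proof.
rewrite mem_compE => /andP[fB f1].
by case/orP=> /eqP <-; rewrite -?(compV_ends fB).
Qed.

Lemma compE_meets f v : f \in B -> incident f v -> v \in W -> f \in A.
Proof.
move=> fB fv vW; rewrite mem_compE fB.
by case/orP: fv => /eqP fv; [rewrite fv | rewrite (compV_ends fB) fv].
Qed.

Lemma compV_closed t y : t \in W -> connect (adj A') t y -> y \in W.
Proof.
move=> tW; move: y; apply: connect_ind => // u w uW /adj_incident[g].
by rewrite inE => /andP[_ gA] /andP[_ gw]; apply: compE_in_compV gA gw.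
Qed.

Lemma connect_compE x : x \in W -> connect (adj A) a x.
Proof.
rewrite mem_compV => cx; apply: connectS (connect_edges_in compV_fst _ cx).
  by apply/subsetP => f; rewrite inE mem_compE => /andP[-> /andP[-> _]].
by move=> y; rewrite mem_compV.
Qed.

Lemma compE_reach x : x \in W -> connect (adj A') a x || connect (adj A') b x.
Proof. by move=> xW; apply: connect_delete_edge e_compE (connect_compE xW). Qed.

Lemma compE_edges_split f : f \in A' ->
  (f \in edges_in A' (comp_of W A' a)) || (f \in edges_in A' (comp_of W A' b)).
Proof.
move=> fA'; have /setD1P[_ fA] := fA'.
have f1W := compE_in_compV fA (incident_fst f).
rewrite !mem_edges_in !mem_comp_of fA' f1W (compE_in_compV fA (incident_snd f)) /=.
by rewrite -!(connect_ends _ fA') !andbb; apply: compE_reach.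
Qed.

Lemma compE_not_forest : 0 < k ->
  (exists2 C, Mk_circuit ends k C & e \in C) -> ~ sparse 0 A.
Proof.
move=> k_gt0 [C circC eC] spA.
have [/existsP[u /andP[uB uW]] | /existsPn noU] :=
  boolP [exists u, (u \notin B) && meets W u].
  have [Z sZ oZ] := Mk_base_add baseB uB; apply: sparse_overfullF _ sZ oZ.
  apply: sparseS (setU1_glue u B A) (sparse_glue spA compE_in_compV _ _ uW _).
  - exact: sparseS (subsetDl _ _) (Mk_base_sparse baseB).
  - move=> f v; rewrite inE => /andP[fA fB] fv; apply: contra fA.
    exact: compE_meets.
  - by rewrite k_gt0.
have outW f v : f \in C :\: A -> incident f v -> v \notin W.
  rewrite inE => /andP[fA _] fv; apply/negP => vW.
  have [fB|fB] := boolP (f \in B); first by rewrite (compE_meets fB fv vW) in fA.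
  by have := noU f; rewrite fB (meets_incident fv vW).
have hC : #|C :&: A| + #|C :\: A| = #|C| := cardsID A C.
have hV : #|Vof (C :&: A)| + #|Vof (C :\: A)| = #|Vof C|.
  rewrite -card_VofU ?setID //; apply/setP => v; rewrite in_setI in_set0.
  apply/negP => /andP[/VofP[f /setIP[_ fA] fv] /VofP[g gCA gv]].
  by move: (outW g v gCA gv); rewrite (compE_in_compV fA fv).
have h1 : #|C :&: A| < #|Vof (C :&: A)| + 0.
  by apply: spA (subsetIr _ _) _; apply/set0Pn; exists e; rewrite inE eC e_compE.
have /andP[_ dC] := Mk_circuit_overfull circC.
have oC2 : overfull k (C :\: A) by rewrite /overfull -card_gt0; apply/andP; split; lia.
by move: eC; rewrite -(Mk_circuit_min circC (subsetDl _ _) oC2) inE e_compE.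
Qed.

Lemma compE_forest_sides :
  sparse 0 (edges_in A' (comp_of W A' a)) -> sparse 0 (edges_in A' (comp_of W A' b)) ->
  ~~ connect (adj A') a b -> sparse 0 A.
Proof.
move=> spa spb nab.
have sA : A \subset edges_in A' (comp_of W A' a) :|: edges_in A' (comp_of W A' b) :|: [set e].
  apply/subsetP => f fA; have [->|fe] := eqVneq f e; first by rewrite !inE eqxx orbT.
  by rewrite !in_setU compE_edges_split // in_setD1 fe.
apply: sparseS sA (sparse_glue spa _ spb _ _ _).
- by move=> f v; rewrite mem_edges_in => /andP[/andP[_ f1] f2] fv; apply: incident_mem fv f1 f2.
- move=> f v; rewrite mem_edges_in => /andP[/andP[_ f1] f2] fv.
  have : v \in comp_of W A' b by apply: incident_mem fv f1 f2.
  rewrite !mem_comp_of => /andP[vW cbv]; rewrite vW /=; apply: contra nab => cav.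
  by apply: connect_trans cav _; rewrite connect_adj_sym.
- by apply: meets_incident (incident_fst e) _; rewrite mem_comp_of compV_fst connect0.
- apply: meets_incident (incident_snd e) _.
  by rewrite in_setC mem_comp_of (negbTE nab) andbF.
Qed.

Lemma compE_side_tree t : t \in W -> sparse 0 (edges_in A' (comp_of W A' t)) ->
  is_tree ends (comp_of W A' t) (edges_in A' (comp_of W A' t)).
Proof.
move=> tW spT; have tT : t \in comp_of W A' t by rewrite mem_comp_of tW connect0.
apply: forest_is_tree spT; first by exists t.
have conn x : x \in comp_of W A' t -> connect (adj (edges_in A' (comp_of W A' t))) t x.
  rewrite mem_comp_of => /andP[_]; apply: connect_edges_in tT _ => y cty.
  by rewrite mem_comp_of cty (compV_closed tW cty).
by move=> x y /conn cx /conn cy; rewrite connect_adj_sym in cx; apply: connect_trans cx cy.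
Qed.

Lemma compE_side_cocircuit t : 0 < k -> incident e t ->
  sparse 0 (edges_in A' (comp_of W A' t)) ->
  let X := e |: [set u in ~: B | meets (comp_of W A' t) u] in
  [/\ Mk_cocircuit ends k X, X :&: B = [set e] &
      forall K, Mk_cocircuit ends k K -> K :&: B = [set e] -> K = X].
Proof.
move=> k_gt0 et spT; set T := comp_of W A' t.
have tW : t \in W := compE_in_compV e_compE et.
have closedT f : f \in B :\ e -> meets T f -> f \in edges_in A' T.
  move=> /setD1P[fe fB] /existsP[v /andP[vT fv]].
  move: vT; rewrite mem_comp_of => /andP[vW ctv].
  have fA : f \in A := compE_meets fB fv vW.
  have fA' : f \in A' by rewrite in_setD1 fe fA.
  rewrite mem_edges_in !mem_comp_of fA' (compE_in_compV fA (incident_fst f)).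
  rewrite (compE_in_compV fA (incident_snd f)) /=.
  rewrite -(connect_ends _ fA') andbb.
  by case/orP: fv => /eqP fv; [rewrite fv | rewrite (connect_ends _ fA') fv].
apply: Mk_cocircuit_star => //.
- by apply: meets_incident et _; rewrite mem_comp_of tW connect0.
- by move=> f fBe fT; have := closedT f fBe fT; rewrite mem_edges_in -andbA => /andP[].
- by apply: sparseS spT; apply/subsetP => f; rewrite inE => /andP[]; apply: closedT.
Qed.

Lemma components_compE :
  components ends W A' = [set comp_of W A' a; comp_of W A' b].
Proof.
apply/setP => T; rewrite /components; apply/imsetP/set2P => [[x xW ->]|[]->].
- case/orP: (compE_reach xW) => cx; [left|right]; apply/setP => y;
    by rewrite !mem_comp_of (same_connect (connect_adj_sym _) cx).
- by exists a; rewrite ?compV_fst.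
- by exists b; rewrite ?compV_snd.
Qed.

Hypothesis e_not_leafless : forall D, D \subset A -> leafless D -> e \notin D.

Lemma compE_split_ends : ~~ connect (adj A') a b.
Proof.
apply/negP => cab; have cba : connect (adj A') b a by rewrite connect_adj_sym.
have [S [sSA eS lS]] := leafless_connector e_compE (sub0set A) leafless0
  (setU11 b _) (setU11 a _) cab cba.
by rewrite (negbTE (e_not_leafless sSA lS)) in eS.
Qed.

Lemma comp_of_compE_neq : comp_of W A' a != comp_of W A' b.
Proof.
apply/eqP => /setP/(_ b); rewrite !mem_comp_of compV_snd connect0 /=.
by rewrite (negbTE compE_split_ends).
Qed.

Lemma compE_sides_not_cyclic :
  ~ sparse 0 (edges_in A' (comp_of W A' a)) -> ~ sparse 0 (edges_in A' (comp_of W A' b)) ->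
  False.
Proof.
have anchor t (Dt : {set E}) : minset (overfull 0) Dt -> Dt \subset edges_in A' (comp_of W A' t) ->
    exists2 x, x \in Vof Dt & connect (adj A') t x.
  move=> /minsetP[/andP[/set0Pn[h hD] _] _] /subsetP sD.
  exists (ends h).1; first exact: Vof_fst.
  by move: (sD h hD); rewrite mem_edges_in mem_comp_of => /andP[/andP[_ /andP[]]].
have sDA t (Dt : {set E}) : Dt \subset edges_in A' (comp_of W A' t) -> Dt \subset A.
  by move=> /subsetP sD; apply/subsetP => f /sD; rewrite mem_edges_in => /andP[/andP[/setD1P[]]].
move=> /not_forest_minset[Da mDa sDa] /not_forest_minset[Db mDb sDb].
have [xa xaD cxa] := anchor a Da mDa sDa; have [xb xbD cxb] := anchor b Db mDb sDb.
have sDA' : Da :|: Db \subset A by rewrite subUset (sDA _ _ sDa) (sDA _ _ sDb).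
have lD := leaflessU (minset_overfull0_leafless mDa) (minset_overfull0_leafless mDb).
have xaD' : xa \in b |: Vof (Da :|: Db) by rewrite in_setU1 VofU in_setU xaD orbT.
have xbD' : xb \in a |: Vof (Da :|: Db) by rewrite in_setU1 VofU in_setU xbD !orbT.
have [S [sSA eS lS]] := leafless_connector e_compE sDA' lD xaD' xbD' cxa cxb.
by rewrite (negbTE (e_not_leafless sSA lS)) in eS.
Qed.

Lemma compE_tree_side : 0 < k -> (exists2 C, Mk_circuit ends k C & e \in C) ->
  exists t t', [/\ incident e t,
    components ends W A' = [set comp_of W A' t; comp_of W A' t'],
    comp_of W A' t != comp_of W A' t',
    sparse 0 (edges_in A' (comp_of W A' t)) & ~ sparse 0 (edges_in A' (comp_of W A' t'))].
Proof.
move=> k_gt0 eC; have comps := components_compE; have neq := comp_of_compE_neq.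
case: (sparseP 0 (edges_in A' (comp_of W A' a))) => spa;
  case: (sparseP 0 (edges_in A' (comp_of W A' b))) => spb.
- by case: (compE_not_forest k_gt0 eC); apply: compE_forest_sides spa spb compE_split_ends.
- by exists a, b; split; rewrite ?incident_fst.
- by exists b, a; split; rewrite ?incident_snd 1?setUC 1?eq_sym.
- by case: (compE_sides_not_cyclic spa spb).
Qed.

End BaseComponent.

End Graphs.

Theorem mainTheorem18 (V E : finType) (ends : E -> V * V) (k : nat)
    (B : {set E}) (e : E) :
  no_isolated ends ->
  1 <= k ->
  Mk_connected ends k ->
  Mk_base ends k B ->
  e \in B ->
  (exists K, kernel_of ends (compV ends B e, compE ends B e) K /\ e \notin K.2) ->
  exists T T' : {set V},
    [/\ components ends (compV ends B e) (compE ends B e :\ e) = [set T; T'],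
        T != T',
        is_tree ends T (edges_in ends (compE ends B e :\ e) T),
        ~ is_tree ends T' (edges_in ends (compE ends B e :\ e) T') &
        let X := e |: [set u in ~: B | [exists v in T, incident ends u v]] in
        [/\ Mk_cocircuit ends k X,
            X :&: B = [set e] &
            forall K, Mk_cocircuit ends k K -> K :&: B = [set e] -> K = X]].
Proof.
move=> _ k_gt0 [_ Mk_conn] baseB eB [K [[reducesK _] eK]].
have e_free (D : {set E}) : D \subset compE ends B e -> leafless ends D -> e \notin D.
  by move=> sD lD; apply: contra eK; apply: (subsetP (leafless_kernel reducesK sD lD)).
have eC : exists2 C, Mk_circuit ends k C & e \in C.
  by have [C [circC eC _]] := Mk_conn e e; exists C.
have [t [t' [et comps neq spt nspt']]] := compE_tree_side baseB eB e_free k_gt0 eC.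
pose W := compV ends B e; pose A' := compE ends B e :\ e.
exists (comp_of ends W A' t), (comp_of ends W A' t'); split=> //.
- exact: compE_side_tree (compE_in_compV (e_compE ends eB) et) spt.
- exact: not_forest_not_tree.
- exact: compE_side_cocircuit.
Qed.
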